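(* Let $X_1,X_2,\dots$ be i.i.d. $\mathbb{Z}$-valued random variables and $S_n=\sum_{j=1}^nX_j$. For every $N\in\mathbb{N}\setminus\{1\}$ and all $y_1,\dots,y_N\in\mathbb{Z}$ with $|y_n-y_{n+1}|\le1$ for $n=1,\dots,N-1$, $$\frac{1}{\sum_{i=0}^{N-1}p^{(N)}_i}\le\mathbb{P}^{(N)}_{\mathcal{R}}\Big(\bigcup_{n=1}^N\{\mathcal{R}^{(N)}_n=(y_n\bmod N)\}\Big)\le\frac{2}{\sum_{i=0}^{N-1}q^{(N)}_i},$$ where $p^{(N)}_0=q^{(N)}_0=1$ and, for $i\in\mathbb{N}$, $p^{(N)}_i=\max_{y\in\mathbb{Z},|y|\le i}P\{S_i\in[y]_N\}$, $q^{(N)}_i=\min_{y\in\mathbb{Z},|y|\le i}P\{S_i\in[y]_N\}$.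
   Context: $X_j$ live on $(\Omega,\mathcal{F},P)$. $[y]_N=\{y+kN:k\in\mathbb{Z}\}$. For $N\in\mathbb{N}$, $X^{(N)}_0$ is uniform on $\{0,\dots,N-1\}$ under $(\Omega_N,\mathcal{F}_N,\mu_N)$; $(b\bmod N)$ is the remainder of $b\in\mathbb{Z}$ divided by $N$; $\mathcal{R}^{(N)}_n=(X^{(N)}_0+S_n\bmod N)$; $\mathbb{P}^{(N)}_{\mathcal{R}}=\mu_N\times P$ (product measure). *)

From HB Require Import structures.
From mathcomp Require Import all_boot all_order all_algebra.
From mathcomp Require Import all_classical all_reals all_analysis.
Set Implicit Arguments. Unset Strict Implicit. Unset Printing Implicit Defensive.
Import Order.TTheory GRing.Theory Num.Theory.
Local Open Scope classical_set_scope.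
Local Open Scope ring_scope.

Section Defs.
Context (d : measure_display) (T : measurableType d) (R : realType).

Definition pr (P : probability T R) (A : set T) : R := fine (P A).

(* Z-valued random variables; here X j stands
   for X_{j+1}.  Since Z is discrete, measurability means every level set
   is measurable, and (mutual) independence means the product rule for
   every finite family of level sets. *)
Definition iid_int (P : probability T R) (X : nat -> T -> int) : Prop :=
  [/\ (forall j (k : int), measurable [set w | X j w = k]),
      (forall j (k : int), P [set w | X j w = k] = P [set w | X 0%N w = k]) &
      (forall (J : seq nat) (k : nat -> int), uniq J ->
         P [set w | forall j, j \in J -> X j w = k j]
         = \big[*%E/1%E]_(j <- J) P [set w | X j w = k j])].

Definition Ssum (X : nat -> T -> int) (n : nat) (w : T) : int :=
  \sum_(j < n) X j w.

Definition rclass (N : nat) (y : int) : set int :=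
  [set z | exists k : int, z = y + k * N%:Z].

Definition pN (P : probability T R) (X : nat -> T -> int) (N i : nat) : R :=
  if i == 0%N then 1 else
  sup [set pr P [set w | rclass N y (Ssum X i w)] | y in [set y : int | `|y| <= i%:Z]].

Definition qN (P : probability T R) (X : nat -> T -> int) (N i : nat) : R :=
  if i == 0%N then 1 else
  inf [set pr P [set w | rclass N y (Ssum X i w)] | y in [set y : int | `|y| <= i%:Z]].

(* P^(N)_R = mu_N x P, with mu_N uniform on {0,...,N-1} (X_0^(N) = identity
   on Omega_N = 'I_N); for an event E of Omega_N x Omega its value is
   (1/N) sum_x P(section of E at x). *)
Definition PR (P : probability T R) (N : nat) (E : set ('I_N * T)) : R :=
  N%:R^-1 * \sum_(x < N) pr P [set w | E (x, w)].

Definition Rn (X : nat -> T -> int) (N n : nat) (xw : 'I_N * T) : int :=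
  (((xw.1 : nat)%:Z + Ssum X n xw.2) %% N%:Z)%Z.

End Defs.

(** Reduce the walk modulo [N]: the residues [X_j mod N] are i.i.d., so every
    event about the first [N] steps of [R^(N)] has a probability given by a
    finite iterated sum.  Let [h_n] indicate that the walk
    started at [x] is congruent to [y_n] at time [n].  Averaging over the
    uniform starting point, [E h_n = 1/N] for every [n], hence
    [sum_(n <= N) sum_x E h_n = N].  Split [h_n] according to the first hitting
    time [m <= n]; by the Markov property each piece factors as
    [E (first hit at m) * P (S_(n-m) in [y_n - y_m]_N)], and the Lipschitz
    condition gives [|y_n - y_m| <= n - m], so the inner sums over [n] are at most
    [sum_i p_i]: this is the lower bound.  Splitting instead according to the
    last hitting time, the translation invariance of the uniform start lets the
    same argument run backwards.  Since [q_i <= 1/N] once [2 i + 1 >= N] and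
    [q_0 = 1], [sum_(i < N) q_i <= sum_(i <= N - m) q_i + sum_(i < m) q_i]; the
    first part is controlled by the forward decomposition and the second, since
    the first hitting time exceeds [i] only if the last one does, by the
    backward one, giving [N P sum_i q_i <= 2 N]. *)

From HB Require Import structures.
From mathcomp Require Import all_boot all_order all_algebra.
From mathcomp Require Import all_classical all_reals all_analysis.
From mathcomp Require Import ring zify.
Import Order.TTheory GRing.Theory Num.Theory.
Set Implicit Arguments. Unset Strict Implicit. Unset Printing Implicit Defensive.
Local Open Scope ring_scope.

Definition scons (a : int) (f : nat -> int) : nat -> int :=
  fun n => if n is n'.+1 then f n' else a.

Definition catf (K : nat) (f1 f2 : nat -> int) : nat -> int :=
  fun j => if (j < K)%N then f1 j else f2 (j - K)%N.

Definition prefix_determined (K : nat) (V : Type) (G : (nat -> int) -> V) :=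
  forall f g, (forall j, (j < K)%N -> f j = g j) -> G f = G g.

Section iid_expectation.
Context (R : numDomainType) (N : nat) (mu : int -> R).

(** Expectation of [G f] when [f 0], ..., [f (K - 1)] are independent with law
    [mu] on [0, ..., N - 1]; the later coordinates of [f] are set to [0]. *)

Fixpoint iexpect (K : nat) (G : (nat -> int) -> R) : R :=
  if K is K'.+1 then \sum_(a < N) mu a * iexpect K' (fun f => G (scons a f))
  else G (fun _ => 0).

Lemma eq_iexpect K G1 G2 : G1 =1 G2 -> iexpect K G1 = iexpect K G2.
Proof. by move=> /funext ->. Qed.

Lemma iexpectD K G1 G2 :
  iexpect K (fun f => G1 f + G2 f) = iexpect K G1 + iexpect K G2.
Proof.
elim: K G1 G2 => [//|K IH] G1 G2 /=.
by rewrite -big_split; apply: eq_bigr => a _; rewrite IH mulrDr.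
Qed.

Lemma iexpectZ K c G : iexpect K (fun f => c * G f) = c * iexpect K G.
Proof.
elim: K G => [//|K IH] G /=.
by rewrite mulr_sumr; apply: eq_bigr => a _; rewrite IH mulrCA.
Qed.

Lemma iexpectZr K c G : iexpect K (fun f => G f * c) = iexpect K G * c.
Proof. by rewrite mulrC -iexpectZ; apply: eq_iexpect => f; rewrite mulrC. Qed.

Lemma iexpect_sum K (I : Type) (r : seq I) (P : pred I) (G : I -> (nat -> int) -> R) :
  iexpect K (fun f => \sum_(i <- r | P i) G i f) = \sum_(i <- r | P i) iexpect K (G i).
Proof.
elim: K G => [//|K IH] G /=.
rewrite exchange_big /=; apply: eq_bigr => a _.
by rewrite IH mulr_sumr.
Qed.

Lemma iexpect_catf K1 K2 G :
  iexpect (K1 + K2) G = iexpect K1 (fun f1 => iexpect K2 (fun f2 => G (catf K1 f1 f2))).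
Proof.
elim: K1 G => [|K1 IH] G /=.
  by apply: eq_iexpect => f; congr G; apply: funext => j; rewrite /catf ltn0 subn0.
apply: eq_bigr => a _; rewrite IH; congr (_ * _).
apply: eq_iexpect => f1; apply: eq_iexpect => f2; congr G; apply: funext => j.
by case: j => [|j] //=; rewrite /catf /= ltnS subSS.
Qed.

Hypothesis mu_ge0 : forall a : 'I_N, 0 <= mu a.

Lemma iexpect_ge0 K G : (forall f, 0 <= G f) -> 0 <= iexpect K G.
Proof.
elim: K G => [|K IH] G h /=; first exact: h.
by apply: sumr_ge0 => a _; apply: mulr_ge0 => //; apply: IH.
Qed.

Lemma ler_iexpect K G1 G2 : (forall f, G1 f <= G2 f) -> iexpect K G1 <= iexpect K G2.
Proof.
move=> h; rewrite -subr_ge0 -mulN1r -iexpectZ -iexpectD.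
by apply: iexpect_ge0 => f; rewrite mulN1r subr_ge0.
Qed.

Hypothesis mu_sum1 : \sum_(a < N) mu a = 1.

Lemma iexpect_cst K c : iexpect K (fun _ => c) = c.
Proof. by elim: K => [//|K IH] /=; rewrite IH -mulr_suml mu_sum1 mul1r. Qed.

Lemma iexpect_prefix K K' G :
  (K' <= K)%N -> prefix_determined K' G -> iexpect K G = iexpect K' G.
Proof.
move=> le dG; rewrite -(subnKC le) iexpect_catf; apply: eq_iexpect => f1.
rewrite -[RHS](iexpect_cst (K - K') (G f1)); apply: eq_iexpect => f2.
by apply: dG => j jK; rewrite /catf jK.
Qed.

Lemma iexpect_last K G : prefix_determined K.+1 G ->
  iexpect K.+1 G = \sum_(a < N) mu a * iexpect K (fun f => G [eta f with K |-> (a : nat)%:Z]).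
Proof.
move=> dG; rewrite -addn1 iexpect_catf /=.
under [RHS]eq_bigr do rewrite -iexpectZ.
rewrite -iexpect_sum; apply: eq_iexpect => f; apply: eq_bigr => a _; congr (_ * _).
apply: dG => j; rewrite ltnS leq_eqVlt /catf /= => /orP[/eqP ->|jK].
  by rewrite ltnn subnn eqxx.
by rewrite jK (ltn_eqF jK).
Qed.

End iid_expectation.

Arguments eq_iexpect {R N mu K G1 G2}.

Definition psum (k : nat) (f : nat -> int) : int := \sum_(j < k) f j.

Lemma psum_catf K1 f1 f2 k : (K1 <= k)%N ->
  psum k (catf K1 f1 f2) = psum K1 f1 + psum (k - K1) f2.
Proof.
move=> le; rewrite /psum -!(big_mkord xpredT) (big_cat_nat (n := K1)) //=.
congr (_ + _); first by apply: eq_big_nat => j /andP[_ jK]; rewrite /catf jK.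
rewrite -{1}[K1]add0n big_addn; apply: eq_big_nat => j _.
by rewrite /catf ltnNge leq_addl /= addnK.
Qed.

Lemma psum_catf_prefix K1 f1 f2 k : (k <= K1)%N -> psum k (catf K1 f1 f2) = psum k f1.
Proof.
by move=> le; apply: eq_bigr => j _; rewrite /catf (leq_trans (ltn_ord j) le).
Qed.

Lemma prefix_determined_psum k : prefix_determined k (psum k).
Proof. by move=> f g h; apply: eq_bigr => j _; rewrite h. Qed.

Section telescoping.
Context (R : comPzRingType).

Lemma telescope_prefix_prod (u : nat -> R) lo hi : (lo <= hi)%N ->
  \sum_(lo <= m < hi) (1 - u m) * \prod_(lo <= k < m) u k = 1 - \prod_(lo <= k < hi) u k.
Proof.
move=> le; rewrite (telescope_sumr_eq (fun m => - \prod_(lo <= k < m) u k)) //.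
  by rewrite [\prod_(lo <= k < lo) _]big_geq //; ring.
by move=> m /andP[lom _]; rewrite big_nat_recr //=; ring.
Qed.

Lemma telescope_suffix_prod (u : nat -> R) lo hi : (lo <= hi)%N ->
  \sum_(lo <= m < hi) (1 - u m) * \prod_(m.+1 <= k < hi) u k = 1 - \prod_(lo <= k < hi) u k.
Proof.
move=> le; rewrite (telescope_sumr_eq (fun m => \prod_(m <= k < hi) u k)) //.
  by rewrite big_geq.
by move=> m /andP[_ mhi]; rewrite [in RHS](big_ltn mhi); ring.
Qed.

Lemma sum_weighted_prefix_sums (w q : nat -> R) n :
  \sum_(1 <= m < n) w m * \sum_(i < m) q i = \sum_(i < n) q i * \sum_(i.+1 <= m < n) w m.
Proof.
elim: n => [|n IH]; first by rewrite big_geq // big_ord0.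
rewrite big_ord_recr /= (big_geq (leqnn _)) mulr0 addr0.
case: n IH => [_|n IH]; first by rewrite big_geq // big_ord0.
rewrite big_nat_recr //= IH mulr_sumr -big_split /=; apply: eq_bigr => i _.
by rewrite [in RHS]big_nat_recr //=; ring.
Qed.

End telescoping.

Lemma dvdz_sub_trans (d a b c : int) :
  (d %| a - b)%Z -> (d %| a - c)%Z = (d %| b - c)%Z.
Proof.
move=> h; have -> : a - c = (a - b) + (b - c) by ring.
by rewrite rpredDl.
Qed.

Section residues.
Context (N : nat) (N_gt0 : (0 < N)%N).

Lemma modN_ge0 z : 0 <= (z %% N%:Z)%Z.
Proof. by apply: modz_ge0; rewrite eqz_nat -lt0n. Qed.

Lemma absz_modN_lt z : (`|(z %% N%:Z)%Z| < N)%N.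
Proof. by rewrite -ltz_nat gez0_abs ?modN_ge0 // ltz_pmod // ltz_nat. Qed.

Definition ord_mod (z : int) : 'I_N := Ordinal (absz_modN_lt z).

Lemma ord_modE z : (ord_mod z : nat)%:Z = (z %% N%:Z)%Z.
Proof. by rewrite /= gez0_abs // modN_ge0. Qed.

Lemma dvdz_sub_ord_mod z : (N%:Z %| z - (ord_mod z : nat)%:Z)%Z.
Proof. by rewrite ord_modE {1}(divz_eq z N%:Z) addrK dvdz_mull. Qed.

Lemma ord_dvdz_inj (x x' : 'I_N) : (N%:Z %| (x : nat)%:Z - (x' : nat)%:Z)%Z -> x = x'.
Proof.
rewrite -eqz_mod_dvd !modz_small ?ltz_nat ?ltn_ord ?andbT // eqz_nat => /eqP h.
exact: val_inj.
Qed.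

Lemma sum_residue_indicator (R : pzSemiRingType) (s : int) :
  \sum_(x < N) ((N%:Z %| (x : nat)%:Z - s)%Z)%:R = 1 :> R.
Proof.
have hs : (N%:Z %| (ord_mod s : nat)%:Z - s)%Z by rewrite -opprB rpredN dvdz_sub_ord_mod.
rewrite (bigD1 (ord_mod s)) //= hs big1 ?addr0 // => x xs.
case hx: (N%:Z %| _ - s)%Z => //; move/negP: xs; case; apply/eqP/ord_dvdz_inj.
have sx : (N%:Z %| s - (x : nat)%:Z)%Z by rewrite -opprB rpredN hx.
by rewrite -(dvdz_sub_trans _ sx) -opprB rpredN.
Qed.

Lemma sum_ord_shift_periodic (R : nmodType) (L : int -> R) (t : int) :
  (forall z z', (N%:Z %| z - z')%Z -> L z = L z') ->
  \sum_(x < N) L ((x : nat)%:Z + t) = \sum_(x < N) L (x : nat)%:Z.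
Proof.
move=> hL; pose h (x : 'I_N) := ord_mod ((x : nat)%:Z + t).
have h_inj : injective h.
  move=> x x' /(congr1 (fun o : 'I_N => (o : nat)%:Z)); rewrite !ord_modE => e.
  apply: ord_dvdz_inj; have : (N%:Z %| ((x : nat)%:Z + t) - ((x' : nat)%:Z + t))%Z.
    by rewrite -eqz_mod_dvd e.
  by have -> : (x : nat)%:Z + t - ((x' : nat)%:Z + t) = (x : nat)%:Z - (x' : nat)%:Z by ring.
rewrite [RHS](reindex_inj h_inj) /=; apply: eq_bigr => x _.
by apply: hL; rewrite dvdz_sub_ord_mod.
Qed.

End residues.

Section nat_sums.
Context (V : nmodType).

Lemma sum_nat_sub_rev (F : nat -> V) m :
  \sum_(1 <= n < m.+1) F (m - n)%N = \sum_(i < m) F i.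
Proof.
rewrite big_nat_rev big_add1 /= big_mkord; apply: eq_bigr => i _.
by congr F; have := ltn_ord i; lia.
Qed.

Lemma sum_nat_geq_sub (F : nat -> V) m n : (1 <= m <= n.+1)%N ->
  \sum_(1 <= k < n.+1 | (m <= k)%N) F (k - m)%N = \sum_(i < n.+1 - m) F i.
Proof.
move=> /andP[m1 mn]; rewrite big_mkcond (big_cat_nat (n := m)) //=.
rewrite big1_seq ?add0r; last first.
  by move=> k /andP[_]; rewrite mem_index_iota => /andP[_]; rewrite ltnNge => /negbTE ->.
rewrite -{1}[m]add0n big_addn big_mkord; apply: eq_bigr => i _.
by rewrite leq_addl addnK.
Qed.

End nat_sums.

Lemma ler_sum_ord (R : numDomainType) (F : nat -> R) a b :
  (a <= b)%N -> (forall i, 0 <= F i) -> \sum_(i < a) F i <= \sum_(i < b) F i.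
Proof.
move=> ab F0; rewrite -!(big_mkord xpredT) (big_cat_nat (n := a) (m := 0%N) (p := b)) //=.
by rewrite lerDl sumr_ge0.
Qed.

Section hitting.
Context (R : realFieldType) (N : nat) (mu : int -> R) (y : nat -> int).
Hypothesis N_gt0 : (0 < N)%N.
Hypothesis mu_ge0 : forall a : 'I_N, 0 <= mu a.
Hypothesis mu_sum1 : \sum_(a < N) mu a = 1.

Local Notation Ex := (iexpect N mu).

Definition hit n (x : int) f : bool := (N%:Z %| x + psum n f - y n)%Z.
Definition ihit n x f : R := (hit n x f)%:R.
Definition imiss n x f : R := 1 - ihit n x f.
Definition first_hit m x f := ihit m x f * \prod_(1 <= k < m) imiss k x f.
Definition last_hit m x f := ihit m x f * \prod_(m.+1 <= k < N.+1) imiss k x f.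
Definition pclass i c := Ex i (fun f => ((N%:Z %| psum i f - c)%Z)%:R).

Lemma ihit_ge0 n x f : 0 <= ihit n x f.
Proof. by rewrite /ihit; case: hit. Qed.

Lemma imiss_ge0 n x f : 0 <= imiss n x f.
Proof. by rewrite /imiss /ihit; case: hit; rewrite ?subrr ?subr0. Qed.

Lemma ihit_imiss n x f : ihit n x f * imiss n x f = 0.
Proof. by rewrite /imiss /ihit; case: hit; rewrite ?subrr ?mulr0 ?mul0r. Qed.

Lemma prod_imiss_ge0_le1 lo hi x f : 0 <= \prod_(lo <= k < hi) imiss k x f <= 1.
Proof.
apply: (big_ind (fun a => 0 <= a <= 1)); first by rewrite ler01 lexx.
  move=> a b /andP[a0 a1] /andP[b0 b1]; rewrite mulr_ge0 //=.
  by rewrite -[1]mulr1; apply: ler_pM.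
by move=> k _; rewrite imiss_ge0 /imiss gerBl ihit_ge0.
Qed.

Lemma ihit_prod_imiss lo hi n x f : (lo <= n < hi)%N ->
  ihit n x f * \prod_(lo <= k < hi) imiss k x f = 0.
Proof.
move=> h; rewrite (bigD1_seq n) ?mem_index_iota ?iota_uniq //=.
by rewrite mulrA ihit_imiss mul0r.
Qed.

Lemma first_hit_ge0 m x f : 0 <= first_hit m x f.
Proof. by rewrite mulr_ge0 ?ihit_ge0 //; case/andP: (prod_imiss_ge0_le1 1 m x f). Qed.

Lemma last_hit_ge0 m x f : 0 <= last_hit m x f.
Proof. by rewrite mulr_ge0 ?ihit_ge0 //; case/andP: (prod_imiss_ge0_le1 m.+1 N.+1 x f). Qed.

Lemma iexpect_first_hit_ge0 m x : 0 <= Ex N (first_hit m x).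
Proof. by apply: iexpect_ge0 => // f; exact: first_hit_ge0. Qed.

Lemma iexpect_last_hit_ge0 m x : 0 <= Ex N (last_hit m x).
Proof. by apply: iexpect_ge0 => // f; exact: last_hit_ge0. Qed.

Lemma pclass_ge0 i c : 0 <= pclass i c.
Proof. by apply: iexpect_ge0 => // f; rewrite ler0n. Qed.

Lemma pclass00 : pclass 0 0 = 1.
Proof. by rewrite /pclass /= /psum big_ord0 subrr dvdz0. Qed.

Lemma prefix_determined_ihit n x : prefix_determined n (ihit n x).
Proof. by move=> f g h; rewrite /ihit /hit (prefix_determined_psum h). Qed.

Lemma prefix_determined_first_hit m x : prefix_determined m (first_hit m x).
Proof.
move=> f g h; rewrite /first_hit (prefix_determined_ihit _ h); congr (_ * _).
apply: eq_big_nat => k /andP[_ km]; rewrite /imiss (@prefix_determined_ihit k x f g) //.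
by move=> j jk; apply: h; exact: ltn_trans jk km.
Qed.

Lemma first_hit_catf_ihit m n x f1 f2 : (1 <= m <= n)%N ->
  first_hit m x (catf m f1 f2) * ihit n x (catf m f1 f2) =
  first_hit m x f1 * ((N%:Z %| psum (n - m) f2 - (y n - y m))%Z)%:R.
Proof.
move=> /andP[m1 mn].
rewrite (@prefix_determined_first_hit m x (catf m f1 f2) f1); last first.
  by move=> j jm; rewrite /catf jm.
rewrite /first_hit /ihit /hit psum_catf //.
case hm: (N%:Z %| x + psum m f1 - y m)%Z; last by rewrite !mul0r.
congr (_ * (nat_of_bool _)%:R).
have -> : x + (psum m f1 + psum (n - m) f2) - y n =
          (x + psum m f1 - y m) + (psum (n - m) f2 - (y n - y m)) by ring.
by rewrite rpredDl.
Qed.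

Lemma iexpect_first_hit_ihit m n x : (1 <= m <= n)%N -> (n <= N)%N ->
  Ex N (fun f => first_hit m x f * ihit n x f) =
  Ex N (first_hit m x) * pclass (n - m) (y n - y m).
Proof.
move=> hmn nN; have mN : (m <= N)%N by case/andP: hmn => _ mn; exact: leq_trans mn nN.
transitivity (Ex (m + (N - m)) (fun f => first_hit m x f * ihit n x f)).
  by rewrite subnKC.
rewrite iexpect_catf (iexpect_prefix mu_sum1 mN (@prefix_determined_first_hit m x)).
rewrite [RHS]mulrC -iexpectZ; apply: eq_iexpect => f1.
rewrite (eq_iexpect (fun f2 => @first_hit_catf_ihit m n x f1 f2 hmn)) iexpectZ mulrC.
congr (_ * _); rewrite /pclass (iexpect_prefix mu_sum1 (leq_sub2r m nN)) //.
by move=> f g h; rewrite (prefix_determined_psum h).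
Qed.

Lemma sum_iexpect_catf3 n m (G : 'I_N -> (nat -> int) -> R) : (n <= m <= N)%N ->
  \sum_(x < N) Ex N (G x) = Ex n (fun f1 => Ex (m - n) (fun f2 =>
     Ex (N - m) (fun f3 => \sum_(x < N) G x (catf n f1 (catf (m - n) f2 f3))))).
Proof.
move=> /andP[nm mN]; rewrite -iexpect_sum.
have -> : Ex N (fun f => \sum_(x < N) G x f) =
          Ex (n + ((m - n) + (N - m))) (fun f => \sum_(x < N) G x f).
  by congr (iexpect _ _ _ _); lia.
by rewrite iexpect_catf; apply: eq_iexpect => f1; rewrite iexpect_catf.
Qed.

Lemma psum_catf3 n m k f1 f2 f3 : (n <= m <= k)%N ->
  psum k (catf n f1 (catf (m - n) f2 f3)) = psum n f1 + psum (m - n) f2 + psum (k - m) f3.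
Proof.
move=> /andP[nm mk]; rewrite psum_catf ?(leq_trans nm mk) // psum_catf ?leq_sub2r //.
by rewrite addrA; congr (_ + psum _ _); lia.
Qed.

Lemma ihit_catf3 n m x f1 f2 f3 : (n <= m)%N ->
  ihit n x (catf n f1 (catf (m - n) f2 f3)) = ((N%:Z %| x + psum n f1 - y n)%Z)%:R.
Proof. by move=> nm; rewrite /ihit /hit psum_catf_prefix. Qed.

Definition last_hit_from m (z : int) (f : nat -> int) : R :=
  ((N%:Z %| z - y m)%Z)%:R *
  \prod_(m.+1 <= k < N.+1) (1 - ((N%:Z %| z + psum (k - m) f - y k)%Z)%:R).

Lemma last_hit_catf3 n m x f1 f2 f3 : (n <= m <= N)%N ->
  last_hit m x (catf n f1 (catf (m - n) f2 f3)) =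
  last_hit_from m (x + psum n f1 + psum (m - n) f2) f3.
Proof.
move=> /andP[nm mN]; rewrite /last_hit /last_hit_from /ihit /hit psum_catf3 ?nm ?leqnn //.
rewrite subnn [psum 0 f3]big_ord0 addr0 !addrA; congr (_ * _).
apply: eq_big_nat => k /andP[mk kN].
by rewrite /imiss /ihit /hit psum_catf3 ?nm ?(ltnW mk) // !addrA.
Qed.

Lemma last_hit_from_mod m z z' f : (N%:Z %| z - z')%Z ->
  last_hit_from m z f = last_hit_from m z' f.
Proof.
move=> hz; have e a : (N%:Z %| z + a)%Z = (N%:Z %| z' + a)%Z.
  have -> : z + a = (z - z') + (z' + a) by ring.
  by rewrite rpredDl.
rewrite /last_hit_from e; congr (_ * _); apply: eq_big_nat => k _.
by rewrite -!addrA e.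
Qed.

Lemma last_hit_catf3_ihit m n x f1 f2 f3 : (n <= m <= N)%N ->
  last_hit m x (catf n f1 (catf (m - n) f2 f3)) * ihit n x (catf n f1 (catf (m - n) f2 f3)) =
  last_hit_from m (x + psum n f1 + psum (m - n) f2) f3 *
    ((N%:Z %| psum (m - n) f2 - (y m - y n))%Z)%:R.
Proof.
move=> h; rewrite last_hit_catf3 // ihit_catf3; last by case/andP: h.
rewrite /last_hit_from.
case hm: (N%:Z %| x + psum n f1 + psum (m - n) f2 - y m)%Z; last by rewrite !mul0r.
rewrite !mul1r; congr (_ * (nat_of_bool _)%:R).
have e : x + psum n f1 + psum (m - n) f2 - y m =
         (x + psum n f1 - y n) + (psum (m - n) f2 - (y m - y n)) by ring.
move: hm; rewrite e => hm; apply/idP/idP => h1.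
  by rewrite -(rpredDl _ h1).
by rewrite -(rpredDr _ h1).
Qed.

Lemma sum_last_hit_from_shift m t f :
  \sum_(x < N) last_hit_from m ((x : nat)%:Z + t) f = \sum_(x < N) last_hit_from m (x : nat)%:Z f.
Proof.
rewrite (sum_ord_shift_periodic N_gt0 (L := last_hit_from m ^~ f)) // => z z'.
exact: last_hit_from_mod.
Qed.

(** Averaging over the uniform start absorbs the position reached at time [n],
    so the Markov property can be applied backwards from the last hit. *)
Lemma sum_iexpect_last_hit_ihit n m : (n <= m <= N)%N ->
  \sum_(x < N) Ex N (fun f => last_hit m (x : nat)%:Z f * ihit n (x : nat)%:Z f) =
  (\sum_(x < N) Ex N (last_hit m (x : nat)%:Z)) * pclass (m - n) (y m - y n).
Proof.
move=> h; pose L f := \sum_(x < N) last_hit_from m (x : nat)%:Z f.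
rewrite !(sum_iexpect_catf3 _ h).
transitivity (Ex n (fun f1 => Ex (m - n) (fun f2 => Ex (N - m) (fun f3 =>
   ((N%:Z %| psum (m - n) f2 - (y m - y n))%Z)%:R * L f3)))).
  apply: eq_iexpect => f1; apply: eq_iexpect => f2; apply: eq_iexpect => f3.
  under eq_bigr do rewrite last_hit_catf3_ihit // -addrA.
  by rewrite -mulr_suml sum_last_hit_from_shift mulrC.
transitivity (Ex n (fun f1 => Ex (N - m) L * pclass (m - n) (y m - y n))).
  apply: eq_iexpect => f1; under eq_iexpect do rewrite iexpectZ mulrC.
  by rewrite iexpectZ.
rewrite iexpect_cst //; congr (_ * _).
rewrite -[LHS](iexpect_cst mu_sum1 n); apply: eq_iexpect => f1.
rewrite -[LHS](iexpect_cst mu_sum1 (m - n)); apply: eq_iexpect => f2.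
apply: eq_iexpect => f3; under eq_bigr do rewrite last_hit_catf3 // -addrA.
by rewrite sum_last_hit_from_shift.
Qed.

Lemma sum_first_hit_from a x f : (1 <= a <= N.+1)%N ->
  \sum_(a <= m < N.+1) first_hit m x f =
  \prod_(1 <= k < a) imiss k x f - \prod_(1 <= k < N.+1) imiss k x f.
Proof.
move=> /andP[a1 aN].
have tel b : (1 <= b)%N ->
    \sum_(1 <= m < b) first_hit m x f = 1 - \prod_(1 <= k < b) imiss k x f.
  move=> b1; rewrite -telescope_prefix_prod //; apply: eq_big_nat => m _.
  by rewrite /first_hit /imiss; congr (_ * _); ring.
apply: (@addrI _ (\sum_(1 <= m < a) first_hit m x f)).
by rewrite -big_cat_nat // !tel ?(leq_trans a1) //; ring.
Qed.

Lemma sum_last_hit_from a x f : (a <= N.+1)%N ->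
  \sum_(a <= m < N.+1) last_hit m x f = 1 - \prod_(a <= k < N.+1) imiss k x f.
Proof.
move=> aN; rewrite -telescope_suffix_prod //; apply: eq_big_nat => m _.
by rewrite /last_hit /imiss; congr (_ * _); ring.
Qed.

Lemma sum_first_hit_ihit n x f : (1 <= n <= N)%N ->
  \sum_(1 <= m < N.+1) first_hit m x f * ihit n x f = ihit n x f.
Proof.
move=> h; rewrite -mulr_suml sum_first_hit_from // (big_geq (leqnn _)).
by rewrite mulrBl mul1r mulrC ihit_prod_imiss ?subr0.
Qed.

Lemma sum_last_hit_ihit n x f : (1 <= n <= N)%N ->
  \sum_(1 <= m < N.+1) last_hit m x f * ihit n x f = ihit n x f.
Proof.
move=> h; rewrite -mulr_suml sum_last_hit_from //.
by rewrite mulrBl mul1r mulrC ihit_prod_imiss ?subr0.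
Qed.

Lemma first_hit_ihit_lt m n x f : (1 <= n < m)%N -> first_hit m x f * ihit n x f = 0.
Proof. by move=> h; rewrite /first_hit mulrAC -mulrA ihit_prod_imiss ?mulr0. Qed.

Lemma last_hit_ihit_gt m n x f : (m < n <= N)%N -> last_hit m x f * ihit n x f = 0.
Proof. by move=> h; rewrite /last_hit mulrAC -mulrA ihit_prod_imiss ?mulr0 // ltnS. Qed.

Lemma some_hit_sum_first_hit x f :
  ([exists n : 'I_N, hit n.+1 x f])%:R = \sum_(1 <= m < N.+1) first_hit m x f.
Proof.
rewrite sum_first_hit_from // (big_geq (leqnn _)); case: existsP => [[n hn]|hn].
  have := @ihit_prod_imiss 1 N.+1 n.+1 x f; rewrite /= ltnS ltn_ord => /(_ isT).
  by rewrite /ihit hn mul1r => ->; rewrite subr0.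
rewrite big1_seq ?subrr // => k /andP[_]; rewrite mem_index_iota => /andP[k1 kN].
rewrite /imiss /ihit; case hk: (hit k x f); last by rewrite subr0.
have kN' : (k.-1 < N)%N by rewrite prednK.
by case: hn; exists (Ordinal kN'); rewrite /= prednK.
Qed.

(** The first hitting time exceeds [i] only if the last one does. *)
Lemma sum_first_hit_le_last_hit i x f : (i <= N)%N ->
  \sum_(i.+1 <= m < N.+1) first_hit m x f <= \sum_(i.+1 <= m < N.+1) last_hit m x f.
Proof.
move=> iN; rewrite sum_first_hit_from // sum_last_hit_from //.
rewrite (big_cat_nat (n := i.+1) (m := 1%N) (p := N.+1)) //=.
have [u0 u1] := andP (prod_imiss_ge0_le1 1 i.+1 x f).
have [v0 v1] := andP (prod_imiss_ge0_le1 i.+1 N.+1 x f).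
set u := \prod_(1 <= k < i.+1) _; set v := \prod_(i.+1 <= k < N.+1) _.
rewrite -subr_ge0; have -> : 1 - v - (u - u * v) = (1 - u) * (1 - v) by ring.
by apply: mulr_ge0; rewrite subr_ge0.
Qed.

Lemma first_hit_weighted_le (q : nat -> R) x f : (forall i, 0 <= q i) ->
  \sum_(1 <= m < N.+1) first_hit m x f * \sum_(i < m) q i <=
  \sum_(1 <= m < N.+1) last_hit m x f * \sum_(i < m) q i.
Proof.
move=> q0; rewrite !sum_weighted_prefix_sums; apply: ler_sum => i _.
by apply: ler_wpM2l => //; apply: sum_first_hit_le_last_hit; rewrite -ltnS.
Qed.

Lemma sum_iexpect_ihit n : \sum_(x < N) Ex N (ihit n (x : nat)%:Z) = 1.
Proof.
rewrite -iexpect_sum -[RHS](iexpect_cst mu_sum1 N); apply: eq_iexpect => f.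
rewrite -[RHS](sum_residue_indicator N_gt0 R (y n - psum n f)); apply: eq_bigr => x _.
by rewrite /ihit /hit; congr ((nat_of_bool _)%:R); congr (_ %| _)%Z; ring.
Qed.

Lemma natr_sum_iexpect_ihit :
  N%:R = \sum_(1 <= n < N.+1) \sum_(x < N) Ex N (ihit n (x : nat)%:Z).
Proof. by rewrite (eq_bigr _ (fun n _ => sum_iexpect_ihit n)) sumr_const_nat subn1. Qed.

(** Expected numbers of hits at times [n >= m], resp. [n <= m], given a hit at
    time [m]. *)
Definition visits_after m :=
  \sum_(1 <= n < N.+1 | (m <= n)%N) pclass (n - m) (y n - y m).
Definition visits_before m :=
  \sum_(1 <= n < N.+1 | (n <= m)%N) pclass (m - n) (y m - y n).

Lemma first_hit_decomposition :
  N%:R = \sum_(x < N) \sum_(1 <= m < N.+1) Ex N (first_hit m (x : nat)%:Z) * visits_after m.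
Proof.
rewrite natr_sum_iexpect_ihit exchange_big /=; apply: eq_bigr => x _.
transitivity (\sum_(1 <= n < N.+1) \sum_(1 <= m < N.+1) (if (m <= n)%N
    then Ex N (first_hit m (x : nat)%:Z) * pclass (n - m) (y n - y m) else 0)).
  apply: eq_big_nat => n /andP[n1 nN]; have hn : (1 <= n <= N)%N by rewrite n1 -ltnS.
  rewrite -(eq_iexpect (fun f => sum_first_hit_ihit (x : nat)%:Z f hn)).
  rewrite iexpect_sum; apply: eq_big_nat => m /andP[m1 _].
  case: ifP => mn; first by rewrite iexpect_first_hit_ihit ?m1 ?mn.
  rewrite -[RHS](iexpect_cst mu_sum1 N); apply: eq_iexpect => f.
  by rewrite first_hit_ihit_lt // n1 ltnNge mn.
rewrite exchange_big /=; apply: eq_big_nat => m _.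
by rewrite /visits_after mulr_sumr [RHS]big_mkcond.
Qed.

Lemma last_hit_decomposition :
  N%:R = \sum_(1 <= m < N.+1) (\sum_(x < N) Ex N (last_hit m (x : nat)%:Z)) * visits_before m.
Proof.
rewrite natr_sum_iexpect_ihit.
transitivity (\sum_(1 <= n < N.+1) \sum_(1 <= m < N.+1) (if (n <= m)%N
    then (\sum_(x < N) Ex N (last_hit m (x : nat)%:Z)) * pclass (m - n) (y m - y n) else 0)).
  apply: eq_big_nat => n /andP[n1 nN]; have hn : (1 <= n <= N)%N by rewrite n1 -ltnS.
  under eq_bigr => x _ do
    rewrite -(eq_iexpect (fun f => sum_last_hit_ihit (x : nat)%:Z f hn)) iexpect_sum.
  rewrite exchange_big /=; apply: eq_big_nat => m /andP[m1 mN]; rewrite ltnS in mN.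
  case: ifP => nm; first by rewrite sum_iexpect_last_hit_ihit // nm.
  apply: big1 => x _; rewrite -[RHS](iexpect_cst mu_sum1 N); apply: eq_iexpect => f.
  by rewrite last_hit_ihit_gt // ltnNge nm.
rewrite exchange_big /=; apply: eq_big_nat => m _.
by rewrite /visits_before mulr_sumr [RHS]big_mkcond.
Qed.

Hypothesis y_lip : forall n : nat, (1 <= n)%N -> (n <= N - 1)%N -> `|y n - y n.+1| <= 1.

Lemma dist_y_le a b : (1 <= a)%N -> (a <= b)%N -> (b <= N)%N -> `|y b - y a| <= (b - a)%:Z.
Proof.
move=> a1 /subnKC <-; move: (b - a)%N => k; rewrite addKn.
elim: k => [|k IH] hk; first by rewrite addn0 subrr normr0.
rewrite addnS in hk *; apply: le_trans (ler_distD (y (a + k)%N) _ _) _.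
rewrite -[k.+1]addn1 PoszD addrC lerD ?IH 1?ltnW // distrC; apply: y_lip.
  exact: leq_trans a1 (leq_addr _ _).
by rewrite leq_subRL ?addn1 // (leq_trans _ hk).
Qed.

Lemma dist_y_shift_le m i : (1 <= m)%N -> (i + m <= N)%N -> `|y (i + m)%N - y m| <= i%:Z.
Proof. by move=> m1 imN; have := dist_y_le m1 (leq_addl i m) imN; rewrite addnK. Qed.

Lemma visits_afterE m : (1 <= m <= N)%N ->
  visits_after m = \sum_(i < N.+1 - m) pclass i (y (i + m)%N - y m).
Proof.
move=> /andP[m1 mN].
rewrite -(sum_nat_geq_sub (fun i => pclass i (y (i + m)%N - y m))) ?m1 ?leqW //.
by apply: eq_bigr => k mk; rewrite subnK.
Qed.

Definition hit_prob := N%:R^-1 *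
  \sum_(x < N) Ex N (fun f => ([exists n : 'I_N, hit n.+1 (x : nat)%:Z f])%:R).

Lemma hit_probE :
  hit_prob = N%:R^-1 * \sum_(x < N) \sum_(1 <= m < N.+1) Ex N (first_hit m (x : nat)%:Z).
Proof.
rewrite /hit_prob; congr (_ * _); apply: eq_bigr => x _.
by rewrite -iexpect_sum; apply: eq_iexpect => f; rewrite some_hit_sum_first_hit.
Qed.

Section lower_bound.
Variable p : nat -> R.
Hypothesis pclass_le_p : forall i c, `|c| <= i%:Z -> pclass i c <= p i.

Lemma p_ge0 i : 0 <= p i.
Proof. by apply: le_trans (pclass_ge0 i 0) _; apply: pclass_le_p; rewrite normr0. Qed.

Lemma visits_after_le m : (1 <= m <= N)%N -> visits_after m <= \sum_(i < N) p i.
Proof.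
move=> hm; rewrite visits_afterE //; case/andP: hm => m1 mN.
apply: (@le_trans _ _ (\sum_(i < N.+1 - m) p i)); last first.
  by apply: ler_sum_ord; [lia|exact: p_ge0].
apply: ler_sum => i _; apply/pclass_le_p/dist_y_shift_le => //.
by have := ltn_ord i; lia.
Qed.

Lemma hit_prob_ge : 1 / \sum_(i < N) p i <= hit_prob.
Proof.
have N_pos : 0 < N%:R :> R by rewrite ltr0n.
have p_ge1 : 1 <= \sum_(i < N) p i.
  apply: le_trans (ler_sum_ord N_gt0 p_ge0); rewrite big_ord1 -pclass00.
  by apply: pclass_le_p; rewrite normr0.
rewrite hit_probE ler_pdivrMr ?(lt_le_trans ltr01 p_ge1) // -mulrA ler_pdivlMl // mulr1.
rewrite [X in X <= _]first_hit_decomposition mulr_suml; apply: ler_sum => x _.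
rewrite mulr_suml; apply: ler_sum_nat => m hm.
by apply: ler_wpM2l; [exact: iexpect_first_hit_ge0 | exact: visits_after_le].
Qed.

End lower_bound.

Section upper_bound.
Variable q : nat -> R.
Hypothesis q_le_pclass : forall i c, `|c| <= i%:Z -> q i <= pclass i c.
Hypothesis q_ge0 : forall i, 0 <= q i.
Hypothesis q0 : q 0%N = 1.

Lemma visits_after_ge m : (1 <= m <= N)%N -> \sum_(i < N.+1 - m) q i <= visits_after m.
Proof.
move=> hm; rewrite visits_afterE //; case/andP: hm => m1 mN.
apply: ler_sum => i _; apply/q_le_pclass/dist_y_shift_le => //.
by have := ltn_ord i; lia.
Qed.

Lemma visits_before_ge m : (m <= N)%N -> \sum_(i < m) q i <= visits_before m.
Proof.
move=> mN; rewrite /visits_before [X in _ <= X]big_mkcond (big_cat_nat (n := m.+1)) //=.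
rewrite [X in _ + X]big1_seq ?addr0; last first.
  by move=> n /andP[_]; rewrite mem_index_iota ltnNge => /andP[/negbTE ->].
rewrite -sum_nat_sub_rev; apply: ler_sum_nat => n /andP[n1 nm]; rewrite ltnS in nm.
by rewrite nm; apply: q_le_pclass; apply: dist_y_le.
Qed.

(** The [N] classes [[j - i]_N], [j < N], partition [Z] and all have [|j - i| <= i]. *)
Lemma natr_mul_q_le1 i : (N <= i.*2.+1)%N -> N%:R * q i <= 1.
Proof.
move=> hi; have sum1 : \sum_(j < N) pclass i ((j : nat)%:Z - i%:Z) = 1.
  rewrite -iexpect_sum -[RHS](iexpect_cst mu_sum1 i); apply: eq_iexpect => f.
  rewrite -[RHS](sum_residue_indicator N_gt0 R (psum i f + i%:Z)); apply: eq_bigr => j _.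
  by congr ((nat_of_bool _)%:R); rewrite -[in RHS]rpredN; congr (_ %| _)%Z; ring.
have -> : N%:R * q i = \sum_(j < N) q i by rewrite sumr_const card_ord mulr_natl.
rewrite -sum1; apply: ler_sum => j _; apply: q_le_pclass.
have jN := ltn_ord j; rewrite ler_norml lerBrDr addNr lerBlDr -PoszD lez_nat.
by apply/andP; split => //; lia.
Qed.

Lemma sum_q_tail_le1 c : (N <= c.*2.+1)%N -> \sum_(c <= i < N) q i <= 1.
Proof.
move=> hc; have N_pos : 0 < N%:R :> R by rewrite ltr0n.
rewrite -(ler_pM2l N_pos) mulr1 mulr_sumr.
apply: (@le_trans _ _ (\sum_(c <= i < N) (1 : R))).
  by apply: ler_sum_nat => i /andP[ci _]; apply: natr_mul_q_le1; lia.
by rewrite sumr_const_nat ler_nat leq_subr.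
Qed.

Lemma one_le_sum_q k : (0 < k)%N -> 1 <= \sum_(i < k) q i.
Proof. by move=> k_gt0; apply: le_trans (ler_sum_ord k_gt0 q_ge0); rewrite big_ord1 q0. Qed.

(** Either [m] or [N + 1 - m] is at least about [N / 2], and beyond that index
    [q] is at most [1 / N], so the longer prefix sum carries all but at most one
    unit of [\sum_(i < N) q i]. *)
Lemma sum_q_le_split m : (1 <= m <= N)%N ->
  \sum_(i < N) q i <= \sum_(i < N.+1 - m) q i + \sum_(i < m) q i.
Proof.
move=> /andP[m1 mN].
have split c : (c <= N)%N -> \sum_(i < N) q i = \sum_(i < c) q i + \sum_(c <= i < N) q i.
  by move=> cN; rewrite -!(big_mkord xpredT) (big_cat_nat (n := c)).
case: (leqP (N.+1 - m) m) => h.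
  rewrite (split m mN) addrC lerD2r; apply: le_trans (one_le_sum_q _); last by rewrite subn_gt0.
  by apply: sum_q_tail_le1; lia.
rewrite (split (N.+1 - m)%N) ?lerD2l; last by lia.
by apply: le_trans (one_le_sum_q m1); apply: sum_q_tail_le1; lia.
Qed.

Lemma sum_first_hit_prefix_q_le :
  \sum_(x < N) \sum_(1 <= m < N.+1) Ex N (first_hit m (x : nat)%:Z) * \sum_(i < m) q i <= N%:R.
Proof.
rewrite [X in _ <= X]last_hit_decomposition.
apply: (@le_trans _ _ (\sum_(1 <= m < N.+1)
    (\sum_(x < N) Ex N (last_hit m (x : nat)%:Z)) * \sum_(i < m) q i)); last first.
  apply: ler_sum_nat => m /andP[_ mN]; apply: ler_wpM2l; last by apply: visits_before_ge.
  by apply: sumr_ge0 => x _; exact: iexpect_last_hit_ge0.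
under [in X in _ <= X]eq_bigr do rewrite mulr_suml.
rewrite [X in _ <= X]exchange_big /=; apply: ler_sum => x _.
under eq_bigr do rewrite -iexpectZr.
under [in X in _ <= X]eq_bigr do rewrite -iexpectZr.
by rewrite -!iexpect_sum; apply: ler_iexpect => // f; exact: first_hit_weighted_le.
Qed.

Lemma hit_prob_le : hit_prob <= 2 / \sum_(i < N) q i.
Proof.
have N_pos : 0 < N%:R :> R by rewrite ltr0n.
have q_pos := lt_le_trans ltr01 (one_le_sum_q N_gt0).
rewrite hit_probE ler_pdivlMr // -mulrA ler_pdivrMl // mulr_natr mulr2n.
apply: (@le_trans _ _ (\sum_(x < N) \sum_(1 <= m < N.+1)
   (Ex N (first_hit m (x : nat)%:Z) * \sum_(i < N.+1 - m) q i +
    Ex N (first_hit m (x : nat)%:Z) * \sum_(i < m) q i))).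
  rewrite mulr_suml; apply: ler_sum => x _; rewrite mulr_suml.
  apply: ler_sum_nat => m /andP[m1 mN].
  rewrite -mulrDr; apply: ler_wpM2l; first exact: iexpect_first_hit_ge0.
  by apply: sum_q_le_split; rewrite m1 -ltnS.
under eq_bigr do rewrite big_split; rewrite big_split /=; apply: lerD.
  rewrite [X in _ <= X]first_hit_decomposition; apply: ler_sum => x _.
  apply: ler_sum_nat => m /andP[m1 mN].
  apply: ler_wpM2l; first exact: iexpect_first_hit_ge0.
  by apply: visits_after_ge; rewrite m1 -ltnS.
exact: sum_first_hit_prefix_q_le.
Qed.

End upper_bound.

End hitting.

Local Open Scope classical_set_scope.

Section countable_unions.
Context d (T : measurableType d) (R : realType) (I : countType).
Implicit Types F G : I -> set T.

Definition enum_family F (n : nat) : set T :=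
  if pickle_inv n is Some i then F i else set0.

Lemma bigcup_enum_family F : \bigcup_i F i = \bigcup_n enum_family F n.
Proof.
apply/seteqP; split => w /=.
  by move=> [i _ Fiw]; exists (pickle i) => //; rewrite /enum_family pickleK_inv.
by move=> [n _]; rewrite /enum_family; case: pickle_inv => [i|]//= Fiw; exists i.
Qed.

Lemma trivIset_enum_family F : trivIset setT F -> trivIset setT (enum_family F).
Proof.
move=> tF n m _ _; rewrite /enum_family.
have := @pickle_invK I n; have := @pickle_invK I m.
case: (pickle_inv n) => [i|]; last by rewrite set0I => _ _ -[].
case: (pickle_inv m) => [i'|]; last by rewrite setI0 => _ _ -[].
by move=> /= <- <- /(tF i i' Logic.I Logic.I) ->.
Qed.

Lemma measurable_enum_family F :
  (forall i, measurable (F i)) -> forall n, measurable (enum_family F n).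
Proof. by move=> mF n; rewrite /enum_family; case: pickle_inv. Qed.

Lemma measure_bigcup_proportional (mu : {measure set T -> \bar R}) F G (c : R) :
  (forall i, measurable (F i)) -> (forall i, measurable (G i)) ->
  trivIset setT F -> trivIset setT G ->
  (forall i, mu (F i) = c%:E * mu (G i))%E ->
  (mu (\bigcup_i F i) = c%:E * mu (\bigcup_i G i))%E.
Proof.
move=> mF mG tF tG FG.
rewrite !bigcup_enum_family !measure_bigcup //;
  do ?[exact: trivIset_enum_family | by move=> n _; exact: measurable_enum_family].
rewrite -nneseriesZl; last by move=> n _; exact: measure_ge0.
apply: eq_eseriesr => n _; rewrite /enum_family; case: pickle_inv => //.
by rewrite measure0 mule0.
Qed.

End countable_unions.

Lemma setI_const_pred (T : Type) (A : set T) (Q : Prop) :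
  A `&` [set _ | Q] = if `[< Q >] then A else set0.
Proof. by apply/seteqP; case: asboolP => q; split => w //= []. Qed.

Lemma preimage_level_sets (T : Type) (V : T -> int) (A : set int) :
  [set w | A (V w)] = \bigcup_k ([set w | V w = k] `&` [set _ | A k]).
Proof.
apply/seteqP; split => w /=; first by move=> Aw; exists (V w).
by move=> [k _ [/= -> ]].
Qed.

Lemma in_bigsetU_ord (T : Type) n (S : 'I_n -> set T) w :
  (\big[setU/set0]_(i < n) S i) w <-> exists i, S i w.
Proof.
split; first by elim/big_rec: _ => [//|i A _ IH [Siw|Aw]]; [exists i | exact: IH].
by move=> [i Siw]; rewrite (bigD1 i) //=; left.
Qed.

Section real_probability.
Context d (T : measurableType d) (R : realType) (P : probability T R).

Lemma measure_prE (A : set T) : measurable A -> P A = (pr P A)%:E.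
Proof. by move=> mA; rewrite /pr fineK // fin_num_measure. Qed.

Lemma pr_ge0 (A : set T) : 0 <= pr P A.
Proof. by rewrite /pr fine_ge0 // measure_ge0. Qed.

Lemma pr_le1 (A : set T) : measurable A -> pr P A <= 1.
Proof. by move=> mA; rewrite -lee_fin -measure_prE // probability_le1. Qed.

Lemma pr_bigsetU_ord n (S : 'I_n -> set T) :
  (forall i, measurable (S i)) -> trivIset setT S ->
  pr P (\big[setU/set0]_(i < n) S i) = \sum_(i < n) pr P (S i).
Proof.
move=> mS tS; rewrite {1}/pr measure_bigsetU_ord //.
by rewrite (eq_bigr _ (fun i _ => measure_prE (mS i))) sumEFin.
Qed.

End real_probability.

Section independent_variables.
Context d (T : measurableType d) (R : realType) (P : probability T R).
Context (X : nat -> T -> int).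
Hypothesis measurable_level : forall j (k : int), measurable [set w | X j w = k].

Lemma measurable_level_const j k (Q : Prop) :
  measurable ([set w | X j w = k] `&` [set _ | Q]).
Proof. by rewrite setI_const_pred; case: asboolP => _ //; exact: measurable_level. Qed.

Lemma measurable_preimage j (A : set int) : measurable [set w | A (X j w)].
Proof.
rewrite preimage_level_sets; apply: countable_bigcupT_measurable => [|k].
  exact: countableP.
exact: measurable_level_const.
Qed.

Lemma measurable_forall_in (L : seq nat) (Q : nat -> set T) :
  (forall j, measurable (Q j)) -> measurable [set w | forall j, j \in L -> Q j w].
Proof.
move=> mQ; elim: L => [|j L IH].
  by have -> : [set w : T | forall j, j \in [::] -> Q j w] = setT by apply/seteqP; split.
have -> : [set w | forall i, i \in j :: L -> Q i w] =
          Q j `&` [set w | forall i, i \in L -> Q i w].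
  apply/seteqP; split => w /=.
    by move=> H; split => [|i iL]; apply: H; rewrite inE ?eqxx ?iL ?orbT.
  by move=> [Qj H] i; rewrite inE => /orP [/eqP ->|/H].
exact: measurableI.
Qed.

Hypothesis same_law : forall j (k : int), P [set w | X j w = k] = P [set w | X 0%N w = k].

Lemma preimage_same_law j (A : set int) :
  P [set w | A (X j w)] = P [set w | A (X 0%N w)].
Proof.
rewrite !preimage_level_sets -[RHS]mul1e.
apply: measure_bigcup_proportional.
- by move=> k; exact: measurable_level_const.
- by move=> k; exact: measurable_level_const.
- by move=> a b _ _ [w [[/= <- _] [/= <- _]]].
- by move=> a b _ _ [w [[/= <- _] [/= <- _]]].
move=> k; rewrite mul1e !setI_const_pred; case: asboolP => _ //; exact: same_law.
Qed.

Hypothesis indep_levels : forall (J : seq nat) (k : nat -> int), uniq J ->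
  P [set w | forall j, j \in J -> X j w = k j]
  = \big[*%E/1%E]_(j <- J) P [set w | X j w = k j].

(** Preimage constraints on [L1] and level constraints on [L2]: conditioning on
    the value of [X j] moves [j] from [L1] to [L2], which extends the product
    rule from level sets to arbitrary preimages one index at a time. *)
Definition mixed_event (L1 L2 : seq nat) (A : nat -> set int) (k : nat -> int) :=
  [set w | (forall j, j \in L1 -> A j (X j w)) /\ (forall j, j \in L2 -> X j w = k j)].

Lemma measurable_mixed_event L1 L2 A k : measurable (mixed_event L1 L2 A k).
Proof.
have -> : mixed_event L1 L2 A k = [set w | forall j, j \in L1 -> A j (X j w)] `&`
                            [set w | forall j, j \in L2 -> [set w | X j w = k j] w].
  by apply/seteqP; split => w /=.
apply: measurableI; apply: measurable_forall_in => j.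
  exact: measurable_preimage.
exact: measurable_level.
Qed.

Lemma mixed_event_level_sets j L1 L2 A k : j \notin L2 ->
  mixed_event (j :: L1) L2 A k =
  \bigcup_a (mixed_event L1 (j :: L2) A [eta k with j |-> a] `&` [set _ | A j a]).
Proof.
move=> jL2; apply/seteqP; split => w /=.
  move=> [HA Hk]; exists (X j w) => //; split; last by apply: HA; rewrite inE eqxx.
  split; first by move=> i iL; apply: HA; rewrite inE iL orbT.
  move=> i; rewrite inE; have [->|ij] := eqVneq i j; rewrite /= ?eqxx //.
  by rewrite (negPf ij) /=; exact: Hk.
move=> [a _ [[HA Hk] Aa]]; split.
  move=> i; rewrite inE => /orP[/eqP ->|/HA //].
  by have := Hk j; rewrite inE eqxx /= => /(_ isT); rewrite eqxx => ->.
move=> i iL2; have := Hk i; rewrite inE iL2 orbT => /(_ isT) /=.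
by case: eqP => // ei; move: jL2; rewrite -ei iL2.
Qed.

Lemma pr_mixed_event L1 L2 A k : uniq (L1 ++ L2) ->
  pr P (mixed_event L1 L2 A k) =
  (\prod_(j <- L1) pr P [set w | A j (X j w)]) * \prod_(j <- L2) pr P [set w | X j w = k j].
Proof.
elim: L1 L2 k => [|j L1 IH] L2 k /=.
  move=> uL2; rewrite big_nil mul1r.
  have -> : mixed_event [::] L2 A k = [set w | forall j, j \in L2 -> X j w = k j].
    by apply/seteqP; split => w /=; [case|split].
  rewrite /pr indep_levels //.
  by rewrite (eq_bigr _ (fun j _ => measure_prE P (measurable_level j (k j)))) prodEFin.
rewrite mem_cat negb_or => /andP[/andP[jL1 jL2] u].
have u' : uniq (L1 ++ j :: L2).
  by rewrite -cat1s uniq_catCA cat1s /= mem_cat negb_or jL1 jL2 u.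
pose c := (\prod_(i <- L1) pr P [set w | A i (X i w)]) * \prod_(i <- L2) pr P [set w | X i w = k i].
have -> : \prod_(i <- j :: L1) pr P [set w | A i (X i w)] *
          \prod_(i <- L2) pr P [set w | X i w = k i]
          = c * pr P [set w | A j (X j w)] by rewrite big_cons /c; ring.
apply: EFin_inj; rewrite EFinM -!measure_prE; last 2 first.
- exact: measurable_preimage.
- exact: measurable_mixed_event.
rewrite mixed_event_level_sets // preimage_level_sets.
apply: measure_bigcup_proportional.
- by move=> a; rewrite setI_const_pred; case: asboolP => _ //; exact: measurable_mixed_event.
- by move=> a; exact: measurable_level_const.
- move=> a b _ _ [w [[[_ H1] _] [[_ H2] _]]].
  by move: (H1 j (mem_head _ _)) (H2 j (mem_head _ _)); rewrite /= eqxx => <-.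
- by move=> a b _ _ [w [[/= <- _] [/= <- _]]].
move=> a; rewrite !setI_const_pred; case: asboolP => _; last by rewrite measure0 mule0.
(* back from the coercion of [P] to a measure to the one to a probability *)
rewrite -[LHS]/(P _) -[X in _ = (_ * X)%E]/(P _).
rewrite !measure_prE //; last exact: measurable_mixed_event.
rewrite IH // -EFinM big_cons /= eqxx; congr (_%:E); rewrite /c mulrAC -mulrA; congr (_ * (_ * _)).
by apply: eq_big_seq => i iL2 /=; case: eqP => // ei; move: jL2; rewrite -ei iL2.
Qed.

Lemma pr_indep_preimages (L : seq nat) (A : nat -> set int) : uniq L ->
  pr P [set w | forall j, j \in L -> A j (X j w)] =
  \prod_(j <- L) pr P [set w | A j (X 0%N w)].
Proof.
move=> uL; under eq_bigr => j _ do rewrite /pr -(preimage_same_law j) -/(pr P _).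
have := @pr_mixed_event L [::] A (fun _ => 0); rewrite cats0 big_nil mulr1 => <- //.
by congr (pr P _); apply/seteqP; split => w /=; [move=> h; split|case].
Qed.

End independent_variables.

Lemma rclassP (N : nat) (c s : int) : rclass N c s <-> (N%:Z %| s - c)%Z.
Proof.
split; first by move=> [k ->]; rewrite addrC addKr dvdz_mull.
by move=> /dvdzP [k e]; exists k; rewrite -e addrC subrK.
Qed.

Lemma qN_ge0 d (T : measurableType d) (R : realType) (P : probability T R)
    (X : nat -> T -> int) (N i : nat) :
  0 <= qN P X N i.
Proof.
rewrite /qN; case: eqP => // _; apply: lb_le_inf.
  by exists (pr P [set w | rclass N 0 (Ssum X i w)]), 0; rewrite ?normr0.
by move=> _ [c _ <-]; exact: pr_ge0.
Qed.

Section walk_modulo.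
Context d (T : measurableType d) (R : realType) (P : probability T R).
Context (X : nat -> T -> int) (N : nat).
Hypothesis measurable_level : forall j (k : int), measurable [set w | X j w = k].
Hypothesis same_law : forall j (k : int), P [set w | X j w = k] = P [set w | X 0%N w = k].
Hypothesis indep_levels : forall (J : seq nat) (k : nat -> int), uniq J ->
  P [set w | forall j, j \in J -> X j w = k j]
  = \big[*%E/1%E]_(j <- J) P [set w | X j w = k j].
Hypothesis N_gt0 : (0 < N)%N.

Definition resids (w : T) (j : nat) : int := (X j w %% N%:Z)%Z.
Definition resid_law (a : int) : R := pr P [set w | resids w 0 = a].

Lemma measurable_resid j a : measurable [set w | resids w j = a].
Proof. exact: (measurable_preimage measurable_level j [set z | (z %% N%:Z)%Z = a]). Qed.

Lemma residsE w j : resids w j = (ord_mod N_gt0 (X j w) : nat)%:Z.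
Proof. by rewrite ord_modE. Qed.

Lemma pr_resids_pinned (L : seq nat) (b : nat -> int) : uniq L ->
  pr P [set w | forall j, j \in L -> resids w j = b j] = \prod_(j <- L) resid_law (b j).
Proof.
exact: (pr_indep_preimages measurable_level same_law indep_levels
          (fun j => [set z | (z %% N%:Z)%Z = b j])).
Qed.

Lemma sum_resid_law : \sum_(a < N) resid_law (a : nat)%:Z = 1.
Proof.
rewrite -pr_bigsetU_ord; first last.
- move=> a b _ _ [w [/= -> /eqP]]; rewrite eqz_nat => /eqP ab; exact: val_inj.
- by move=> a; exact: measurable_resid.
have -> : \big[setU/set0]_(a < N) [set w | resids w 0 = (a : nat)%:Z] = setT.
  apply/seteqP; split => // w _; apply/in_bigsetU_ord.
  by exists (ord_mod N_gt0 (X 0%N w)); rewrite /= residsE.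
by rewrite /pr probability_setT.
Qed.

Definition pinned_event (F : (nat -> int) -> bool) (L : seq nat) (b : nat -> int) :=
  [set w | F (resids w) /\ forall j, j \in L -> resids w j = b j].

Lemma pinned_event_split K F L b : K \notin L ->
  pinned_event F L b = \big[setU/set0]_(a < N)
    pinned_event (fun f => F [eta f with K |-> (a : nat)%:Z]) (K :: L)
                 [eta b with K |-> (a : nat)%:Z].
Proof.
move=> KL; apply/seteqP; split => w /=.
  move=> [Fw Lw]; apply/in_bigsetU_ord; exists (ord_mod N_gt0 (X K w)); split.
    by congr (F _ = true): Fw; apply: funext => j /=; case: eqP => // ->; rewrite residsE.
  move=> j; rewrite inE; have [->|jK] := eqVneq j K; first by rewrite /= eqxx residsE.
  by rewrite /= (negPf jK) /=; exact: Lw.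
move=> /in_bigsetU_ord [a [Fw Lw]].
have wK : resids w K = (a : nat)%:Z by have := Lw K; rewrite inE eqxx /= eqxx => ->.
split.
  by move: Fw; congr (F _ = true); apply: funext => j /=; case: eqP => // ->.
move=> j jL; have := Lw j; rewrite inE jL orbT /= => /(_ isT).
by case: eqP => // ej; move: KL; rewrite -ej jL.
Qed.

Lemma pr_pinned_event K F L b : prefix_determined K F -> uniq L -> all (leq K) L ->
  measurable (pinned_event F L b) /\
  pr P (pinned_event F L b) =
    iexpect N resid_law K (fun f => (F f)%:R) * \prod_(j <- L) resid_law (b j).
Proof.
elim: K F L b => [|K IH] F L b dF uL aL.
  have Fw w : F (resids w) = F (fun _ => 0) by apply: dF.
  rewrite /=; case F0: (F (fun _ => 0)); rewrite ?mul1r ?mul0r.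
    have -> : pinned_event F L b = [set w | forall j, j \in L -> resids w j = b j].
      by apply/seteqP; split => w; rewrite /pinned_event /= Fw F0; [case|split].
    split; last exact: pr_resids_pinned.
    by apply: measurable_forall_in => j; exact: measurable_resid.
  have -> : pinned_event F L b = set0.
    by apply/seteqP; split => w //; rewrite /pinned_event /= Fw F0; case.
  by rewrite /pr measure0.
have KL : K \notin L by apply/negP => /(allP aL); rewrite ltnn.
have uKL : uniq (K :: L) by rewrite /= KL uL.
have aKL : all (leq K) (K :: L).
  by rewrite /= leqnn; apply/allP => j /(allP aL); exact: ltnW.
have dFa (a : 'I_N) : prefix_determined K (fun f => F [eta f with K |-> (a : nat)%:Z]).
  move=> f g h; apply: dF => j; rewrite ltnS leq_eqVlt /= => /orP[/eqP ->|jK].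
    by rewrite eqxx.
  by rewrite (ltn_eqF jK) h.
have {}IH (a : 'I_N) := IH _ (K :: L) [eta b with K |-> (a : nat)%:Z] (dFa a) uKL aKL.
rewrite (pinned_event_split _ _ KL); split.
  by apply: bigsetU_measurable => a _; case: (IH a).
rewrite pr_bigsetU_ord; first last.
- move=> a a' _ _ [w [[_ h1] [_ h2]]].
  move: (h1 K) (h2 K); rewrite inE eqxx /= eqxx => -> // /(_ isT) /eqP.
  by rewrite eqz_nat => /eqP; apply: val_inj.
- by move=> a; case: (IH a).
rewrite iexpect_last; last by move=> f g h; rewrite (dF f g h).
rewrite mulr_suml; apply: eq_bigr => a _; have [_ ->] := IH a.
rewrite big_cons /= eqxx mulrCA mulrA; congr (_ * _).
by apply: eq_big_seq => j jL /=; case: eqP => // ej; move: KL; rewrite -ej jL.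
Qed.

Lemma pr_prefix_event K (F : (nat -> int) -> bool) : prefix_determined K F ->
  pr P [set w | F (resids w)] = iexpect N resid_law K (fun f => (F f)%:R).
Proof.
move=> dF; have [_] := pr_pinned_event (L := [::]) (fun _ => 0) dF isT isT.
rewrite big_nil mulr1 => <-; congr (pr P _).
by apply/seteqP; split => w /=; [move=> ?; split|case].
Qed.

Lemma measurable_prefix_event K (F : (nat -> int) -> bool) : prefix_determined K F ->
  measurable [set w | F (resids w)].
Proof.
move=> dF; have [+ _] := pr_pinned_event (L := [::]) (fun _ => 0) dF isT isT.
by congr measurable; apply/seteqP; split => w /=; [case|move=> ?; split].
Qed.

Local Notation mu := resid_law.

Lemma Ssum_resids n w : (N%:Z %| Ssum X n w - psum n (resids w))%Z.
Proof.
rewrite /Ssum /psum -sumrB; apply: rpred_sum => j _.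
by rewrite /resids {1}(divz_eq (X j w) N%:Z) addrK dvdz_mull.
Qed.

Lemma rclass_Ssum_event i c :
  [set w | rclass N c (Ssum X i w)] = [set w | (N%:Z %| psum i (resids w) - c)%Z].
Proof.
apply/seteqP; split => w /=; rewrite rclassP => h;
  by rewrite -(dvdz_sub_trans _ (Ssum_resids i w)) in h *.
Qed.

Lemma prefix_determined_rclass i c :
  prefix_determined i (fun f => (N%:Z %| psum i f - c)%Z).
Proof. by move=> f g h; rewrite (prefix_determined_psum h). Qed.

Lemma pr_rclass_Ssum i c : pr P [set w | rclass N c (Ssum X i w)] = pclass N mu i c.
Proof.
by rewrite rclass_Ssum_event (pr_prefix_event (@prefix_determined_rclass i c)).
Qed.

Lemma measurable_rclass_Ssum i c : measurable [set w | rclass N c (Ssum X i w)].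
Proof.
by rewrite rclass_Ssum_event; exact: measurable_prefix_event (@prefix_determined_rclass i c).
Qed.

Lemma pclass_le_pN i c : `|c| <= i%:Z -> pclass N mu i c <= pN P X N i.
Proof.
move=> hc; rewrite /pN; case: eqP => [i0|_].
  by move: hc; rewrite i0 normr_le0 => /eqP ->; rewrite pclass00.
rewrite -pr_rclass_Ssum; apply: ub_le_sup; last by exists c.
by exists 1 => _ [c' _ <-]; apply: pr_le1; exact: measurable_rclass_Ssum.
Qed.

Lemma qN_le_pclass i c : `|c| <= i%:Z -> qN P X N i <= pclass N mu i c.
Proof.
move=> hc; rewrite /qN; case: eqP => [i0|_].
  by move: hc; rewrite i0 normr_le0 => /eqP ->; rewrite pclass00.
rewrite -pr_rclass_Ssum; apply: ge_inf; last by exists c.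
by exists 0 => _ [c' _ <-]; exact: pr_ge0.
Qed.

Variable y : nat -> int.

Lemma hit_event_resids (x : 'I_N) :
  [set w | exists n : nat, [/\ (1 <= n)%N, (n <= N)%N & Rn X n (x, w) = (y n %% N%:Z)%Z]] =
  [set w | [exists n : 'I_N, hit N y n.+1 (x : nat)%:Z (resids w)]].
Proof.
have hitP n w : Rn X n (x, w) = (y n %% N%:Z)%Z <-> hit N y n (x : nat)%:Z (resids w).
  have e : (N%:Z %| ((x : nat)%:Z + Ssum X n w) - ((x : nat)%:Z + psum n (resids w)))%Z.
    by rewrite opprD addrACA subrr add0r Ssum_resids.
  rewrite /Rn /hit /=; split => [/eqP|h]; last apply/eqP.
    by rewrite eqz_mod_dvd (dvdz_sub_trans _ e).
  by rewrite eqz_mod_dvd (dvdz_sub_trans _ e).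
apply/seteqP; split => w /=.
  move=> [n [n1 nN /hitP hn]]; apply/existsP.
  have n'N : (n.-1 < N)%N by rewrite prednK.
  by exists (Ordinal n'N); rewrite /= prednK.
by move=> /existsP [n /hitP hn]; exists n.+1; split => //; exact: ltn_ord.
Qed.

Lemma PR_hit_event :
  PR P [set xw : 'I_N * T | exists n : nat,
         [/\ (1 <= n)%N, (n <= N)%N & Rn X n xw = (y n %% N%:Z)%Z]] = hit_prob N mu y.
Proof.
rewrite /PR /hit_prob; congr (_ * _); apply: eq_bigr => x _.
rewrite (_ : [set w | _] =
  [set w | [exists n : 'I_N, hit N y n.+1 (x : nat)%:Z (resids w)]]); last first.
  exact: hit_event_resids.
rewrite (pr_prefix_event
  (F := fun f => [exists n : 'I_N, hit N y n.+1 (x : nat)%:Z f]) (K := N)) // => f g h.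
apply: eq_existsb => n; rewrite /hit (@prefix_determined_psum n.+1 f g) //.
by move=> j jn; apply: h; exact: leq_trans jn (ltn_ord n).
Qed.

End walk_modulo.

Theorem proposition3 (d : measure_display) (T : measurableType d) (R : realType)
  (P : probability T R) (X : nat -> T -> int) (N : nat) (y : nat -> int) :
  iid_int P X ->
  (2 <= N)%N ->
  (forall n : nat, (1 <= n)%N -> (n <= N - 1)%N -> `|y n - y n.+1| <= 1) ->
  let E := [set xw : 'I_N * T |
              exists n : nat, [/\ (1 <= n)%N, (n <= N)%N &
                 Rn X n xw = (y n %% N%:Z)%Z]] in
  1 / (\sum_(i < N) pN P X N i) <= PR P E /\
  PR P E <= 2 / (\sum_(i < N) qN P X N i).
Proof.
move=> [mX same_law indep] N_ge2 y_lip E; have N_gt0 : (0 < N)%N by exact: ltnW.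
have mu_ge0 (a : 'I_N) : 0 <= resid_law P X N a by exact: pr_ge0.
have mu_sum1 := sum_resid_law P mX N_gt0.
have -> : PR P E = hit_prob N (resid_law P X N) y := PR_hit_event mX same_law indep N_gt0 y.
split; first exact (hit_prob_ge N_gt0 mu_ge0 mu_sum1 y_lip (pclass_le_pN mX same_law indep N_gt0)).
exact (hit_prob_le N_gt0 mu_ge0 mu_sum1 y_lip
  (qN_le_pclass mX same_law indep N_gt0) (qN_ge0 P X N) erefl).
Qed.
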